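(* Let $n\in\mathbb{N}$ and $\nu^*(u) = (\sin(nu), -\cos(nu))^{\top}$ for $u\in\mathbb{S}^1_{2\pi}$. Let $X^*:\mathbb{S}^1_{2\pi}\to\mathbb{R}^2$ be a non-constant map such that $(X^*,\nu^* )$ is a Legendre curve, and let $\lambda^*:[0,\infty)\to\mathbb{R}$ with $\lambda^*(0)=1$. Then $(X(u,t),\nu(u,t)) := (\lambda^*(t)X^*(u),\nu^*(u))$ is an inverse curvature flow (of class $C([0,\infty);C^1)\cap C^\infty(\mathbb{S}^1_{2\pi}\times(0,\infty))$) if and only if $$\lambda^*(t) = e^{(1-\frac{m^2}{n^2})t}\quad (t\ge 0),$$ $$X^*(u) = C_1\begin{pmatrix} \frac{n}{n^2-m^2}\sin(nu)\cos(mu) - \frac{m}{n^2-m^2}\cos(nu)\sin(mu)\\ -\frac{n}{n^2-m^2}\cos(nu)\cos(mu) - \frac{m}{n^2-m^2}\sin(nu)\sin(mu)\end{pmatrix} + C_2\begin{pmatrix} \frac{n}{n^2-m^2}\sin(nu)\sin(mu) + \frac{m}{n^2-m^2}\cos(nu)\cos(mu)\\ -\frac{n}{n^2-m^2}\cos(nu)\sin(mu) + \frac{m}{n^2-m^2}\sin(nu)\cos(mu)\end{pmatrix}$$ for $u\in\mathbb{S}^1_{2\pi}$, where the constants $m, C_1, C_2$ satisfy one of: (i) $m\in\mathbb{N}\setminus\{n\}$ and $(C_1,C_2)\in\mathbb{R}^2\setminus\{(0,0)\}$; or (ii) $m=0$, $C_1\neq0$, $C_2=0$. Moreover, in this case the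 Legendre curvature $(\ell^*,\beta^* )$ of $(X^*,\nu^* )$ is $\ell^*(u)=n$, $\beta^*(u) = C_1\cos(mu)+C_2\sin(mu)$.
   Context: $\mathbb{S}^1_{2\pi} = \mathbb{R}/2\pi\mathbb{Z}$ and $\mathbb{S}^1\subset\mathbb{R}^2$ is the unit circle; $J$ denotes anticlockwise rotation by $\pi/2$. A Legendre curve is a $C^1$ pair $(X,\nu):\mathbb{S}^1_{2\pi}\to\mathbb{R}^2\times\mathbb{S}^1$ with $\langle \partial_u X,\nu\rangle = 0$; $\mu=J\nu$; its Legendre curvature is $\ell = \langle\partial_u\nu,\mu\rangle$, $\beta=\langle\partial_uX,\mu\rangle$; it is $\ell$-convex if $\ell>0$. A flow of Legendre curves is a map $(X,\nu):\mathbb{S}^1_{2\pi}\times[0,\infty)\to\mathbb{R}^2\times\mathbb{S}^1$ each of whose time slices is a Legendre curve, with normal velocity $N=\langle\partial_tX,\nu\rangle$. An inverse curvature flow is such a flow, smooth for $t>0$, whose time slices are $\ell$-convex for $t>0$ and with $N=\beta/\ell$ on $\mathbb{S}^1_{2\pi}\times(0,\infty)$. *)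

From Stdlib Require Import Reals List.
From Coquelicot Require Import Coquelicot.
Open Scope R_scope.

Definition dot (p q : R * R) : R := fst p * fst q + snd p * snd q.

Definition J (p : R * R) : R * R := (- snd p, fst p).

Definition on_unit_circle (p : R * R) : Prop := fst p ^ 2 + snd p ^ 2 = 1.

(** Maps on S^1_{2pi} = R/2piZ are represented as 2pi-periodic maps on R. *)
Definition periodic2pi (X : R -> R * R) : Prop := forall u, X (u + 2 * PI) = X u.

Definition C1_fun (f : R -> R) : Prop :=
  (forall u, ex_derive f u) /\ (forall u, continuous (Derive f) u).

Definition C1_curve (X : R -> R * R) : Prop :=
  C1_fun (fun u => fst (X u)) /\ C1_fun (fun u => snd (X u)).

Definition dcurve (X : R -> R * R) (u : R) : R * R :=
  (Derive (fun v => fst (X v)) u, Derive (fun v => snd (X v)) u).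

Definition legendre (X nu : R -> R * R) : Prop :=
  periodic2pi X /\ periodic2pi nu /\ C1_curve X /\ C1_curve nu /\
  (forall u, on_unit_circle (nu u)) /\
  (forall u, dot (dcurve X u) (nu u) = 0).

Definition leg_ell (nu : R -> R * R) (u : R) : R := dot (dcurve nu u) (J (nu u)).
Definition leg_beta (X nu : R -> R * R) (u : R) : R := dot (dcurve X u) (J (nu u)).

Definition slice (F : R -> R -> R * R) (t : R) : R -> R * R := fun u => F u t.

Definition flow_of_legendre (X nu : R -> R -> R * R) : Prop :=
  forall t, 0 <= t -> legendre (slice X t) (slice nu t).

(** Iterated partial derivatives: [true] = d/du, [false] = d/dt. *)
Fixpoint pderiv (l : list bool) (f : R -> R -> R) : R -> R -> R :=
  match l with
  | nil => f
  | b :: l' =>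
      let g := pderiv l' f in
      if b then (fun u t => Derive (fun v => g v t) u)
      else (fun u t => Derive (fun s => g u s) t)
  end.

Definition smooth_pos (f : R -> R -> R) : Prop :=
  forall (l : list bool) (u t : R), 0 < t ->
    ex_derive (fun v => pderiv l f v t) u /\
    ex_derive (fun s => pderiv l f u s) t /\
    continuous (fun p : R * R => pderiv l f (fst p) (snd p)) (u, t).

Definition smooth_pos_curve (X : R -> R -> R * R) : Prop :=
  smooth_pos (fun u t => fst (X u t)) /\ smooth_pos (fun u t => snd (X u t)).

Definition cont_time_C1 (f : R -> R -> R) : Prop :=
  (forall t, 0 <= t -> C1_fun (fun u => f u t)) /\
  (forall t, 0 <= t -> forall eps, 0 < eps -> exists delta, 0 < delta /\
     forall s, 0 <= s -> Rabs (s - t) < delta -> forall u,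
       Rabs (f u s - f u t) <= eps /\
       Rabs (Derive (fun v => f v s) u - Derive (fun v => f v t) u) <= eps).

Definition cont_time_C1_curve (X : R -> R -> R * R) : Prop :=
  cont_time_C1 (fun u t => fst (X u t)) /\ cont_time_C1 (fun u t => snd (X u t)).

Definition normal_velocity (X nu : R -> R -> R * R) (u t : R) : R :=
  dot (Derive (fun s => fst (X u s)) t, Derive (fun s => snd (X u s)) t) (nu u t).

Definition inverse_curvature_flow (X nu : R -> R -> R * R) : Prop :=
  flow_of_legendre X nu /\
  cont_time_C1_curve X /\ cont_time_C1_curve nu /\
  smooth_pos_curve X /\ smooth_pos_curve nu /\
  (forall t u, 0 < t -> 0 < leg_ell (slice nu t) u) /\
  (forall t u, 0 < t ->
     normal_velocity X nu u t = leg_beta (slice X t) (slice nu t) u / leg_ell (slice nu t) u).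

Definition nu_star (n : nat) (u : R) : R * R := (sin (INR n * u), - cos (INR n * u)).

Definition admissible (n m : nat) (C1 C2 : R) : Prop :=
  ((1 <= m)%nat /\ m <> n /\ (C1 <> 0 \/ C2 <> 0)) \/
  (m = 0%nat /\ C1 <> 0 /\ C2 = 0).

Definition X_star_formula (n m : nat) (C1 C2 u : R) : R * R :=
  let d := INR n ^ 2 - INR m ^ 2 in
  let a := INR n / d in
  let b := INR m / d in
  let sn := sin (INR n * u) in let cn := cos (INR n * u) in
  let sm := sin (INR m * u) in let cm := cos (INR m * u) in
  (C1 * (a * sn * cm - b * cn * sm) + C2 * (a * sn * sm + b * cn * cm),
   C1 * (- a * cn * cm - b * sn * sm) + C2 * (- a * cn * sm + b * sn * cm)).

From Pilot Require Import Defs.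
From Stdlib Require Import Reals Lra Lia List ZArith Classical.
From Coquelicot Require Import Coquelicot.
Open Scope R_scope.

(* Write X* = p nu* + r J nu* in the frame of the normal.  The Legendre condition
   gives p' = n r and r' = beta - n p, and the flow equation N = beta / ell reads
   lambda'(t) p(u) = lambda(t) beta(u) / n.  Separating variables, lambda = e^(c t)
   and beta = n c p, so (p, r) solves a linear oscillator with p'' = n^2 (c - 1) p.
   A nonzero 2pi-periodic solution exists only for c = 1 - m^2/n^2 with m a natural
   number (for c > 1 the product p r is nondecreasing and periodic, for c = 1 p is
   constant); m = n is excluded because it makes beta = 0 and X* constant.  The
   coefficients of p give C1 and C2.  Conversely, the explicit flows are e^(c t)
   times trigonometric polynomials, which provides the required regularity. *)

(* [in_frame nu a b] is [a nu + b (J nu)]. *)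
Definition in_frame (nu : R * R) (a b : R) : R * R :=
  (a * fst nu - b * snd nu, a * snd nu + b * fst nu).

Lemma dot_in_frame_r v nu a b :
  dot v (in_frame nu a b) = a * dot v nu + b * dot v (J nu).
Proof. unfold dot, in_frame, J; simpl; ring. Qed.

Section UnitFrame.
Variable nu : R * R.
Hypothesis nu_unit : on_unit_circle nu.

Lemma dot_in_frame_nu a b : dot (in_frame nu a b) nu = a.
Proof.
unfold dot, in_frame; simpl; unfold on_unit_circle in nu_unit.
transitivity (a * (fst nu ^ 2 + snd nu ^ 2)); [ring | rewrite nu_unit; ring].
Qed.

Lemma dot_in_frame_J a b : dot (in_frame nu a b) (J nu) = b.
Proof.
unfold dot, in_frame, J; simpl; unfold on_unit_circle in nu_unit.
transitivity (b * (fst nu ^ 2 + snd nu ^ 2)); [ring | rewrite nu_unit; ring].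
Qed.

Lemma in_frame_dot v : in_frame nu (dot v nu) (dot v (J nu)) = v.
Proof.
unfold dot, in_frame, J; simpl; unfold on_unit_circle in nu_unit.
destruct v as [x y]; simpl; f_equal.
- transitivity (x * (fst nu ^ 2 + snd nu ^ 2)); [ring | rewrite nu_unit; ring].
- transitivity (y * (fst nu ^ 2 + snd nu ^ 2)); [ring | rewrite nu_unit; ring].
Qed.

End UnitFrame.

Lemma is_derive_dot (X Y : R -> R * R) u :
  ex_derive (fun v => fst (X v)) u -> ex_derive (fun v => snd (X v)) u ->
  ex_derive (fun v => fst (Y v)) u -> ex_derive (fun v => snd (Y v)) u ->
  is_derive (fun v => dot (X v) (Y v)) u (dot (dcurve X u) (Y u) + dot (X u) (dcurve Y u)).
Proof.
intros HX1 HX2 HY1 HY2; unfold dot, dcurve; simpl.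
(* [auto_derive] only sees through applied variables, hence the abbreviations. *)
set (x1 := fun v => fst (X v)); set (x2 := fun v => snd (X v)).
set (y1 := fun v => fst (Y v)); set (y2 := fun v => snd (Y v)).
change (is_derive (fun v => x1 v * y1 v + x2 v * y2 v) u
  (Derive x1 u * y1 u + Derive x2 u * y2 u + (x1 u * Derive y1 u + x2 u * Derive y2 u))).
auto_derive; [tauto |].
change (fun x => x1 x) with x1; change (fun x => x2 x) with x2.
change (fun x => y1 x) with y1; change (fun x => y2 x) with y2; ring.
Qed.

(** [(A, B, w)] stands for the term [A cos (w u) + B sin (w u)]. *)
Fixpoint trig_poly (L : list (R * R * R)) (u : R) : R :=
  match L with
  | nil => 0
  | (A, B, w) :: L' => A * cos (w * u) + B * sin (w * u) + trig_poly L' u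
  end.

Fixpoint trig_poly_deriv (L : list (R * R * R)) : list (R * R * R) :=
  match L with
  | nil => nil
  | (A, B, w) :: L' => (B * w, - (A * w), w) :: trig_poly_deriv L'
  end.

Fixpoint trig_poly_bound (L : list (R * R * R)) : R :=
  match L with
  | nil => 0
  | (A, B, _) :: L' => Rabs A + Rabs B + trig_poly_bound L'
  end.

Lemma is_derive_trig_poly L u : is_derive (trig_poly L) u (trig_poly (trig_poly_deriv L) u).
Proof.
induction L as [|[[A B] w] L IH]; simpl.
- apply (is_derive_const 0).
- apply (is_derive_plus (fun u => A * cos (w * u) + B * sin (w * u)) (trig_poly L)); [|exact IH].
  auto_derive; [exact I | ring].
Qed.

Lemma ex_derive_trig_poly L u : ex_derive (trig_poly L) u.
Proof. eexists; apply is_derive_trig_poly. Qed.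

Lemma Derive_trig_poly L u : Derive (trig_poly L) u = trig_poly (trig_poly_deriv L) u.
Proof. apply is_derive_unique, is_derive_trig_poly. Qed.

Lemma continuous_trig_poly L u : continuous (trig_poly L) u.
Proof. apply (ex_derive_continuous (trig_poly L)), ex_derive_trig_poly. Qed.

Lemma Rabs_trig_poly_le L u : Rabs (trig_poly L u) <= trig_poly_bound L.
Proof.
induction L as [|[[A B] w] L IH]; simpl.
- rewrite Rabs_R0; lra.
- assert (HA : Rabs (A * cos (w * u)) <= Rabs A).
  { rewrite Rabs_mult; rewrite <- (Rmult_1_r (Rabs A)) at 2.
    apply Rmult_le_compat_l; [apply Rabs_pos | apply Rabs_le, COS_bound]. }
  assert (HB : Rabs (B * sin (w * u)) <= Rabs B).
  { rewrite Rabs_mult; rewrite <- (Rmult_1_r (Rabs B)) at 2.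
    apply Rmult_le_compat_l; [apply Rabs_pos | apply Rabs_le, SIN_bound]. }
  pose proof (Rabs_triang (A * cos (w * u) + B * sin (w * u)) (trig_poly L u)).
  pose proof (Rabs_triang (A * cos (w * u)) (B * sin (w * u))); lra.
Qed.

Lemma trig_poly_bound_ge0 L : 0 <= trig_poly_bound L.
Proof. eapply Rle_trans; [apply Rabs_pos | apply (Rabs_trig_poly_le L 0)]. Qed.

Definition product_to_sum (P Q S T a b : R) : list (R * R * R) :=
  ((S - Q) / 2, (P + T) / 2, a + b) :: ((S + Q) / 2, (P - T) / 2, a - b) :: nil.

Lemma trig_poly_product_to_sum P Q S T a b u :
  P * sin (a * u) * cos (b * u) + Q * sin (a * u) * sin (b * u)
  + S * cos (a * u) * cos (b * u) + T * cos (a * u) * sin (b * u)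
  = trig_poly (product_to_sum P Q S T a b) u.
Proof.
unfold product_to_sum; simpl.
replace ((a + b) * u) with (a * u + b * u) by ring.
replace ((a - b) * u) with (a * u - b * u) by ring.
rewrite sin_plus, cos_plus, sin_minus, cos_minus; field.
Qed.

Lemma locally_pos t : 0 < t -> locally t (fun s => 0 < s).
Proof. intro Ht; apply (open_gt 0 t Ht). Qed.

Lemma continuous_exp_scal c t : continuous (fun s => exp (c * s)) t.
Proof. apply (ex_derive_continuous (fun s => exp (c * s))); auto_derive; exact I. Qed.

Section SeparableFlow.
Variables (f : R -> R -> R) (c : R) (L : list (R * R * R)).
Hypothesis f_separable : forall u t, 0 <= t -> f u t = exp (c * t) * trig_poly L u.

Lemma pderiv_separable l :
  exists K L', forall u t, 0 < t -> pderiv l f u t = K * exp (c * t) * trig_poly L' u.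
Proof.
induction l as [|b l [K [L' HL']]].
- exists 1, L; intros u t Ht; simpl; rewrite f_separable by lra; ring.
- destruct b; cbn [pderiv].
  + exists K, (trig_poly_deriv L'); intros u t Ht.
    rewrite (Derive_ext _ (fun v => K * exp (c * t) * trig_poly L' v)) by (intro; apply HL', Ht).
    rewrite Derive_scal, Derive_trig_poly; reflexivity.
  + exists (K * c), L'; intros u t Ht.
    rewrite (Derive_ext_loc _ (fun s => K * exp (c * s) * trig_poly L' u)).
    * apply is_derive_unique; auto_derive; [exact I | ring].
    * eapply filter_imp; [|apply (locally_pos t Ht)]; intros s Hs; apply HL', Hs.
Qed.

Lemma separable_smooth_pos : smooth_pos f.
Proof.
intros l u t Ht; destruct (pderiv_separable l) as [K [L' HL']].
split; [|split].
- apply (ex_derive_ext (fun v => K * exp (c * t) * trig_poly L' v)).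
  + intro; symmetry; apply HL', Ht.
  + apply ex_derive_scal, ex_derive_trig_poly.
- apply (ex_derive_ext_loc (fun s => K * exp (c * s) * trig_poly L' u)).
  + eapply filter_imp; [|apply (locally_pos t Ht)]; intros s Hs; symmetry; apply HL', Hs.
  + auto_derive; exact I.
- apply (continuous_ext_loc _ (fun p : R * R => K * exp (c * snd p) * trig_poly L' (fst p))).
  + eapply filter_imp; [|exact (continuous_snd u t _ (locally_pos t Ht))].
    intros [a b] Hb; symmetry; apply HL', Hb.
  + apply (continuous_mult (fun p : R * R => K * exp (c * snd p)) (fun p => trig_poly L' (fst p))).
    * apply (continuous_scal_r K (fun p : R * R => exp (c * snd p))).
      apply (continuous_comp (fun p : R * R => snd p) (fun s => exp (c * s))).
      -- apply continuous_snd.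
      -- apply continuous_exp_scal.
    * apply (continuous_comp (fun p : R * R => fst p) (trig_poly L')).
      -- apply continuous_fst.
      -- apply continuous_trig_poly.
Qed.

Lemma Derive_separable_slice t u : 0 <= t ->
  Derive (fun v => f v t) u = exp (c * t) * trig_poly (trig_poly_deriv L) u.
Proof.
intro Ht; rewrite (Derive_ext _ (fun v => exp (c * t) * trig_poly L v)) by (intro; apply f_separable, Ht).
rewrite Derive_scal, Derive_trig_poly; reflexivity.
Qed.

Lemma separable_slice_C1 t : 0 <= t -> Defs.C1_fun (fun u => f u t).
Proof.
intro Ht; split; intro u.
- apply (ex_derive_ext (fun v => exp (c * t) * trig_poly L v)).
  + intro; symmetry; apply f_separable, Ht.
  + apply ex_derive_scal, ex_derive_trig_poly.
- apply (continuous_ext (fun u => exp (c * t) * trig_poly (trig_poly_deriv L) u)).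
  + intro; symmetry; apply Derive_separable_slice, Ht.
  + apply (continuous_scal_r (exp (c * t)) (trig_poly (trig_poly_deriv L))).
    apply continuous_trig_poly.
Qed.

Lemma separable_cont_time_C1 : cont_time_C1 f.
Proof.
split; [exact separable_slice_C1|].
intros t Ht eps Heps.
set (M := trig_poly_bound L + trig_poly_bound (trig_poly_deriv L) + 1).
assert (HM : 0 < M).
{ pose proof (trig_poly_bound_ge0 L); pose proof (trig_poly_bound_ge0 (trig_poly_deriv L)).
  unfold M; lra. }
destruct (proj1 (filterlim_locally _ _) (continuous_exp_scal c t) (mkposreal (eps / M) (Rdiv_lt_0_compat _ _ Heps HM)))
  as [d Hd].
exists d; split; [apply cond_pos|]; intros s Hs Hst u.
assert (Hexp : Rabs (exp (c * s) - exp (c * t)) < eps / M) by exact (Hd s Hst).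
assert (Hclose : forall B, Rabs B <= M - 1 -> Rabs (exp (c * s) * B - exp (c * t) * B) <= eps).
{ intros B HB.
  replace (exp (c * s) * B - exp (c * t) * B) with (B * (exp (c * s) - exp (c * t))) by ring.
  rewrite Rabs_mult.
  apply Rle_trans with (M * (eps / M)); [|right; field; lra].
  apply Rmult_le_compat; [apply Rabs_pos | apply Rabs_pos | lra | lra]. }
split.
- rewrite !f_separable by lra; apply Hclose.
  pose proof (Rabs_trig_poly_le L u); pose proof (trig_poly_bound_ge0 (trig_poly_deriv L)); unfold M; lra.
- rewrite !Derive_separable_slice by lra; apply Hclose.
  pose proof (Rabs_trig_poly_le (trig_poly_deriv L) u); pose proof (trig_poly_bound_ge0 L); unfold M; lra.
Qed.

End SeparableFlow.

Lemma mean_value (f df : R -> R) a b :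
  (forall x, Rmin a b <= x <= Rmax a b -> is_derive f x (df x)) ->
  exists x, Rmin a b <= x <= Rmax a b /\ f b - f a = df x * (b - a).
Proof.
intro Hd; apply MVT_gen.
- intros x Hx; apply Hd; lra.
- intros x Hx; apply continuity_pt_filterlim, (ex_derive_continuous f).
  eexists; apply Hd, Hx.
Qed.

Lemma is_derive_zero_eq (f : R -> R) a b :
  (forall x, Rmin a b <= x <= Rmax a b -> is_derive f x 0) -> f a = f b.
Proof. intro Hd; destruct (mean_value f (fun _ => 0) a b Hd) as [x [_ E]]; lra. Qed.

Lemma is_derive_nonneg_le (f df : R -> R) a b : a <= b ->
  (forall x, is_derive f x (df x)) -> (forall x, 0 <= df x) -> f a <= f b.
Proof.
intros Hab Hd Hpos; destruct (mean_value f df a b (fun x _ => Hd x)) as [x [_ E]].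
assert (0 <= df x * (b - a)) by (apply Rmult_le_pos; [apply Hpos | lra]); lra.
Qed.

Lemma nu_star_unit n u : on_unit_circle (nu_star n u).
Proof.
unfold on_unit_circle, nu_star; simpl.
pose proof (sin2_cos2 (INR n * u)); unfold Rsqr in H; lra.
Qed.

Lemma ex_derive_nu_star n u :
  ex_derive (fun v => fst (nu_star n v)) u /\ ex_derive (fun v => snd (nu_star n v)) u.
Proof. unfold nu_star; simpl; split; auto_derive; exact I. Qed.

Lemma dcurve_nu_star n u : dcurve (nu_star n) u = in_frame (nu_star n u) 0 (INR n).
Proof.
unfold dcurve, in_frame, nu_star; simpl; f_equal; apply is_derive_unique;
  auto_derive; auto; ring.
Qed.

Lemma dcurve_J_nu_star n u :
  dcurve (fun v => J (nu_star n v)) u = in_frame (nu_star n u) (- INR n) 0.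
Proof.
unfold dcurve, in_frame, nu_star, J; simpl; f_equal; apply is_derive_unique;
  auto_derive; auto; ring.
Qed.

Lemma leg_ell_nu_star n u : leg_ell (nu_star n) u = INR n.
Proof. unfold leg_ell; rewrite dcurve_nu_star; apply dot_in_frame_J, nu_star_unit. Qed.

Lemma leg_beta_scale (X nu : R -> R * R) k u :
  leg_beta (fun v => (k * fst (X v), k * snd (X v))) nu u = k * leg_beta X nu u.
Proof. unfold leg_beta, dot, dcurve; simpl; rewrite !Derive_scal; ring. Qed.

Lemma C1_fun_scal k f : Defs.C1_fun f -> Defs.C1_fun (fun u => k * f u).
Proof.
intros [Hd Hc]; split; intro u.
- apply ex_derive_scal, Hd.
- apply (continuous_ext (fun v => k * Derive f v)).
  + intro v; symmetry; apply Derive_scal.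
  + apply (continuous_scal_r k (Derive f)), Hc.
Qed.

Lemma legendre_scale (X nu : R -> R * R) k : legendre X nu ->
  legendre (fun u => (k * fst (X u), k * snd (X u))) nu.
Proof.
intros [HXp [Hnup [[HX1 HX2] [Hnu [Hunit Horth]]]]].
split; [|split; [exact Hnup|split; [|split; [exact Hnu|split; [exact Hunit|]]]]].
- intro u; simpl; rewrite HXp; reflexivity.
- split; apply C1_fun_scal; assumption.
- intro u; specialize (Horth u); unfold dot, dcurve in *; simpl in *.
  rewrite !Derive_scal; transitivity (k * 0); [rewrite <- Horth|]; ring.
Qed.

Lemma leg_beta_zero_const (X nu : R -> R * R) : legendre X nu ->
  (forall u, leg_beta X nu u = 0) -> forall u v, X u = X v.
Proof.
intros [_ [_ [[[HX1 _] [HX2 _]] [_ [Hunit Horth]]]]] Hbeta.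
assert (HdX : forall u, dcurve X u = (0, 0)).
{ intro u; rewrite <- (in_frame_dot (nu u) (Hunit u) (dcurve X u)), Horth.
  unfold leg_beta in Hbeta; rewrite Hbeta; unfold in_frame; f_equal; ring. }
intros u v; rewrite (surjective_pairing (X u)), (surjective_pairing (X v)); f_equal.
- apply (is_derive_zero_eq (fun w => fst (X w))); intros x _.
  pose proof (f_equal fst (HdX x)) as E; simpl in E; rewrite <- E; apply Derive_correct, HX1.
- apply (is_derive_zero_eq (fun w => snd (X w))); intros x _.
  pose proof (f_equal snd (HdX x)) as E; simpl in E; rewrite <- E; apply Derive_correct, HX2.
Qed.

Definition support (n : nat) (X : R -> R * R) (u : R) : R := dot (X u) (nu_star n u).
Definition tangential (n : nat) (X : R -> R * R) (u : R) : R := dot (X u) (J (nu_star n u)).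

Lemma curve_in_frame n X u : X u = in_frame (nu_star n u) (support n X u) (tangential n X u).
Proof. symmetry; apply in_frame_dot, nu_star_unit. Qed.

Section LegendreFrame.
Variables (n : nat) (X : R -> R * R).
Hypothesis X_legendre : legendre X (nu_star n).

Lemma support_is_derive u : is_derive (support n X) u (INR n * tangential n X u).
Proof.
destruct X_legendre as [_ [_ [[[HX1 _] [HX2 _]] [_ [_ Horth]]]]].
destruct (ex_derive_nu_star n u) as [Hnu1 Hnu2].
assert (H := is_derive_dot X (nu_star n) u (HX1 u) (HX2 u) Hnu1 Hnu2).
rewrite dcurve_nu_star, dot_in_frame_r, Horth, Rmult_0_l, !Rplus_0_l in H; exact H.
Qed.

Lemma tangential_is_derive u :
  is_derive (tangential n X) u (leg_beta X (nu_star n) u - INR n * support n X u).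
Proof.
destruct X_legendre as [_ [_ [[[HX1 _] [HX2 _]] _]]].
destruct (ex_derive_nu_star n u) as [Hnu1 Hnu2].
assert (H := is_derive_dot X (fun v => J (nu_star n v)) u (HX1 u) (HX2 u)
  (ex_derive_opp _ _ Hnu2) Hnu1).
rewrite dcurve_J_nu_star, dot_in_frame_r, Rmult_0_l, Rplus_0_r in H.
unfold leg_beta, support; replace (_ - _) with (dot (dcurve X u) (J (nu_star n u)) + - INR n * dot (X u) (nu_star n u)) by ring; exact H.
Qed.

Lemma support_periodic u : support n X (u + 2 * PI) = support n X u.
Proof.
destruct X_legendre as [HXp [Hnup _]]; unfold support; rewrite HXp, Hnup; reflexivity.
Qed.

Lemma tangential_periodic u : tangential n X (u + 2 * PI) = tangential n X u.
Proof.
destruct X_legendre as [HXp [Hnup _]]; unfold tangential; rewrite HXp, Hnup; reflexivity.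
Qed.

End LegendreFrame.

Lemma exp_growth_unique (lam : R -> R) c :
  (forall t, 0 < t -> is_derive lam t (c * lam t)) ->
  filterlim lam (at_right 0) (locally (lam 0)) ->
  forall t, 0 <= t -> lam t = lam 0 * exp (c * t).
Proof.
intros Hd Hlim.
set (K := lam 1 * exp (- c * 1)).
assert (HK : forall t, 0 < t -> lam t = K * exp (c * t)).
{ intros t Ht.
  assert (Hg : lam t * exp (- c * t) = K).
  { apply (is_derive_zero_eq (fun s => lam s * exp (- c * s))); intros s Hs.
    assert (Hs0 : 0 < s) by (pose proof (Rmin_glb_lt t 1 0 Ht Rlt_0_1); lra).
    assert (H := is_derive_mult lam (fun s => exp (- c * s)) s _ _ (Hd s Hs0)
      ltac:(auto_derive; [exact I | reflexivity]) Rmult_comm).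
    replace 0 with (plus (mult (c * lam s) (exp (- c * s))) (mult (lam s) (- c * 1 * exp (- c * s))))
      by (unfold plus, mult; simpl; ring).
    exact H. }
  rewrite <- Hg, Rmult_assoc, <- exp_plus; replace (- c * t + c * t) with 0 by ring.
  rewrite exp_0; ring. }
assert (HK0 : lam 0 = K).
{ assert (Hexp : filterlim lam (at_right 0) (locally (K * exp (c * 0)))).
  { apply (filterlim_ext_loc (fun t => K * exp (c * t))).
    - exists (mkposreal 1 Rlt_0_1); intros t _ Ht; symmetry; apply HK, Ht.
    - apply (filterlim_filter_le_1 (F := locally 0)); [apply filter_le_within|].
      apply (continuous_scal_r K (fun t => exp (c * t))), continuous_exp_scal. }
  rewrite (filterlim_locally_unique lam _ _ Hlim Hexp), Rmult_0_r, exp_0; ring. }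
intros t Ht; destruct (Rle_lt_or_eq_dec 0 t Ht) as [Hpos | <-].
- rewrite HK0; apply HK, Hpos.
- rewrite Rmult_0_r, exp_0; ring.
Qed.

Lemma harmonic_unique (p r : R -> R) (k w : R) : k <> 0 -> w <> 0 ->
  (forall u, is_derive p u (k * r u)) ->
  (forall u, is_derive r u (- (w ^ 2 / k) * p u)) ->
  forall u, p u = p 0 * cos (w * u) + k * r 0 / w * sin (w * u) /\
            r u = r 0 * cos (w * u) - w / k * p 0 * sin (w * u).
Proof.
intros Hk Hw Hp Hr.
set (A := p 0); set (B := k * r 0 / w).
set (e1 := fun u => p u - (A * cos (w * u) + B * sin (w * u))).
set (e2 := fun u => r u - w / k * (- A * sin (w * u) + B * cos (w * u))).
(* the energy of the difference with the explicit solution is conserved *)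
set (E := fun u => w ^ 2 * e1 u ^ 2 + k ^ 2 * e2 u ^ 2).
assert (HE : forall u, is_derive E u 0).
{ intro u; unfold E, e1, e2.
  auto_derive; [split; [|split]; [eexists; apply Hp | eexists; apply Hr | exact I] |].
  change (fun x => p x) with p; change (fun x => r x) with r.
  rewrite (is_derive_unique _ _ _ (Hp u)), (is_derive_unique _ _ _ (Hr u)); field; auto. }
assert (HE0 : E 0 = 0).
{ unfold E, e1, e2, B, A; rewrite Rmult_0_r, sin_0, cos_0; field; auto. }
intro u; assert (HEu : E u = 0) by (rewrite <- HE0; apply is_derive_zero_eq; auto).
unfold E in HEu.
assert (He1 : e1 u = 0).
{ apply Rsqr_eq_0; rewrite Rsqr_pow2; apply Rmult_eq_reg_l with (w ^ 2); [|apply pow_nonzero, Hw].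
  assert (0 <= w ^ 2 * e1 u ^ 2) by (apply Rmult_le_pos; apply pow2_ge_0).
  assert (0 <= k ^ 2 * e2 u ^ 2) by (apply Rmult_le_pos; apply pow2_ge_0); lra. }
assert (He2 : e2 u = 0).
{ apply Rsqr_eq_0; rewrite Rsqr_pow2; apply Rmult_eq_reg_l with (k ^ 2); [|apply pow_nonzero, Hk].
  rewrite He1 in HEu; lra. }
unfold e1, e2, B in *; split; [lra|].
transitivity (w / k * (- A * sin (w * u) + k * r 0 / w * cos (w * u))); [lra | field; auto].
Qed.

Lemma rotation_fixed_point_cos A B C S : A <> 0 \/ B <> 0 -> S * S + C * C = 1 ->
  A * C + B * S = A -> - A * S + B * C = B -> C = 1.
Proof.
intros HAB Hunit H1 H2.
assert (KA : (2 - 2 * C) * A = 0).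
{ transitivity ((C - 1) * (A * C + B * S - A) - S * (- A * S + B * C - B)
                + A * (1 - (S * S + C * C))); [ring|].
  rewrite H1, H2, Hunit; ring. }
assert (KB : (2 - 2 * C) * B = 0).
{ transitivity (S * (A * C + B * S - A) + (C - 1) * (- A * S + B * C - B)
                + B * (1 - (S * S + C * C))); [ring|].
  rewrite H1, H2, Hunit; ring. }
destruct HAB as [HA | HB].
- destruct (Rmult_integral _ _ KA); [lra | contradiction].
- destruct (Rmult_integral _ _ KB); [lra | contradiction].
Qed.

Lemma cos_2PI_mult_eq_1 w : 0 < w -> cos (w * (2 * PI)) = 1 -> exists m : nat, w = INR m.
Proof.
intros Hw Hc; replace (w * (2 * PI)) with (2 * (w * PI)) in Hc by ring.
rewrite cos_2a_sin in Hc.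
assert (Hs : sin (w * PI) = 0) by (apply Rsqr_eq_0; unfold Rsqr; lra).
destruct (sin_eq_0_0 _ Hs) as [k Hk].
assert (Hwk : w = IZR k) by (apply Rmult_eq_reg_r with PI; [exact Hk | apply PI_neq0]).
assert (Hk0 : (0 < k)%Z) by (apply lt_0_IZR; lra).
exists (Z.to_nat k); rewrite INR_IZR_INZ, Z2Nat.id by lia; exact Hwk.
Qed.

Lemma trig_coeffs_nonzero A B x : A * cos x + B * sin x <> 0 -> A <> 0 \/ B <> 0.
Proof.
intro H; destruct (Req_dec A 0) as [HA | HA]; [right | left; exact HA].
intro HB; apply H; rewrite HA, HB; ring.
Qed.

Section PeriodicOscillator.
Variables (p r : R -> R) (k c : R).
Hypothesis k_pos : 0 < k.
Hypothesis p_deriv : forall u, is_derive p u (k * r u).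
Hypothesis r_deriv : forall u, is_derive r u (k * (c - 1) * p u).
Hypothesis p_periodic : forall u, p (u + 2 * PI) = p u.
Hypothesis r_periodic : forall u, r (u + 2 * PI) = r u.

(* [p r] is nondecreasing and periodic, hence constant, so its derivative
   [k r^2 + k (c - 1) p^2] vanishes. *)
Lemma oscillator_expanding_zero : 1 < c -> forall u, p u = 0.
Proof.
intros Hc u0.
set (g := fun u => p u * r u).
set (dg := fun u => k * r u * r u + p u * (k * (c - 1) * p u)).
assert (Hdg : forall u, is_derive g u (dg u)).
{ intro u; assert (H := is_derive_mult p r u _ _ (p_deriv u) (r_deriv u) Rmult_comm).
  unfold dg; replace (k * r u * r u + _) with
    (plus (mult (k * r u) (r u)) (mult (p u) (k * (c - 1) * p u))) by (unfold plus, mult; simpl; ring).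
  exact H. }
assert (Hpos : forall u, 0 <= dg u).
{ intro u; unfold dg.
  assert (0 <= k * (r u * r u)) by (apply Rmult_le_pos; [lra | apply Rle_0_sqr]).
  assert (0 <= k * (c - 1) * (p u * p u)) by (apply Rmult_le_pos; [apply Rmult_le_pos | apply Rle_0_sqr]; lra).
  replace (k * r u * r u + p u * (k * (c - 1) * p u)) with (k * (r u * r u) + k * (c - 1) * (p u * p u)) by ring.
  lra. }
assert (Hloc : locally u0 (fun y => g y = g (u0 - PI))).
{ exists (mkposreal PI PI_RGT_0); intros y Hy; change (Rabs (y - u0) < PI) in Hy.
  apply Rabs_lt_between' in Hy.
  assert (g (u0 - PI) <= g y) by (apply (is_derive_nonneg_le g dg); auto; lra).
  assert (g y <= g (u0 - PI + 2 * PI)) by (apply (is_derive_nonneg_le g dg); auto; lra).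
  assert (g (u0 - PI + 2 * PI) = g (u0 - PI)) by (unfold g; rewrite p_periodic, r_periodic; reflexivity).
  lra. }
assert (Hdg0 : dg u0 = 0).
{ rewrite <- (is_derive_unique _ _ _ (Hdg u0)), (Derive_ext_loc _ _ _ Hloc); apply Derive_const. }
unfold dg in Hdg0; apply Rsqr_eq_0; unfold Rsqr.
assert (Hkc : 0 < k * (c - 1)) by (apply Rmult_lt_0_compat; lra).
assert (0 <= k * (r u0 * r u0)) by (apply Rmult_le_pos; [lra | apply Rle_0_sqr]).
assert (0 <= k * (c - 1) * (p u0 * p u0)) by (apply Rmult_le_pos; [lra | apply Rle_0_sqr]).
assert (Hp2 : k * (c - 1) * (p u0 * p u0) = 0).
{ enough (k * (r u0 * r u0) + k * (c - 1) * (p u0 * p u0) = 0) by lra.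
  rewrite <- Hdg0; ring. }
destruct (Rmult_integral _ _ Hp2); [lra | assumption].
Qed.

Lemma oscillator_critical : c = 1 -> forall u, p u = p 0 /\ r u = 0.
Proof.
intros Hc.
assert (Hr : forall u, r u = r 0).
{ intro u; apply is_derive_zero_eq; intros x _.
  replace 0 with (k * (c - 1) * p x) by (rewrite Hc; ring); apply r_deriv. }
assert (Hplin : forall u, p u = p 0 + k * r 0 * u).
{ intro u; enough (E : p u - k * r 0 * u = p 0 - k * r 0 * 0) by lra.
  apply (is_derive_zero_eq (fun v => p v - k * r 0 * v)); intros x _.
  assert (Hlin : is_derive (fun v => k * r 0 * v) x (k * r 0)) by (auto_derive; [exact I | ring]).
  assert (H := is_derive_minus _ _ x _ _ (p_deriv x) Hlin).
  rewrite (Hr x) in H; unfold minus, plus, opp in H; simpl in H.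
  rewrite Rplus_opp_r in H; exact H. }
assert (Hr0 : r 0 = 0).
{ pose proof (p_periodic 0) as E; rewrite Rplus_0_l, (Hplin (2 * PI)) in E.
  assert (E' : k * r 0 * (2 * PI) = 0) by lra.
  pose proof PI_RGT_0; destruct (Rmult_integral _ _ E') as [E'' |]; [|lra].
  destruct (Rmult_integral _ _ E''); [lra | assumption]. }
intro u; rewrite (Hplin u), (Hr u), Hr0; split; ring.
Qed.

Lemma oscillator_contracting : c < 1 -> (exists u0, p u0 <> 0) ->
  exists m : nat, (0 < m)%nat /\ c = 1 - INR m ^ 2 / k ^ 2 /\
    forall u, p u = p 0 * cos (INR m * u) + k * r 0 / INR m * sin (INR m * u) /\
              r u = r 0 * cos (INR m * u) - INR m / k * p 0 * sin (INR m * u).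
Proof.
intros Hc [u0 Hu0].
set (w := k * sqrt (1 - c)).
assert (Hw : 0 < w) by (apply Rmult_lt_0_compat; [lra | apply sqrt_lt_R0; lra]).
assert (Hw2 : w ^ 2 = k ^ 2 * (1 - c)).
{ unfold w; rewrite Rpow_mult_distr, <- (Rsqr_pow2 (sqrt (1 - c))), Rsqr_sqrt by lra; reflexivity. }
assert (Hsol := harmonic_unique p r k w ltac:(lra) ltac:(lra) p_deriv
  ltac:(intro u; replace (- (w ^ 2 / k) * p u) with (k * (c - 1) * p u)
          by (rewrite Hw2; field; lra); apply r_deriv)).
assert (HAB : p 0 <> 0 \/ k * r 0 / w <> 0).
{ apply (trig_coeffs_nonzero _ _ (w * u0)); rewrite <- (proj1 (Hsol u0)); exact Hu0. }
assert (Hcos : cos (w * (2 * PI)) = 1).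
{ apply (rotation_fixed_point_cos (p 0) (k * r 0 / w) _ (sin (w * (2 * PI))) HAB).
  - pose proof (sin2_cos2 (w * (2 * PI))); unfold Rsqr in H; exact H.
  - rewrite <- (proj1 (Hsol (2 * PI))), <- (Rplus_0_l (2 * PI)), p_periodic; reflexivity.
  - apply Rmult_eq_reg_l with (w / k); [|apply Rgt_not_eq, Rdiv_lt_0_compat; lra].
    transitivity (r (2 * PI)); [rewrite (proj2 (Hsol (2 * PI))); field; lra|].
    rewrite <- (Rplus_0_l (2 * PI)), r_periodic; field; lra. }
destruct (cos_2PI_mult_eq_1 w Hw Hcos) as [m Hm].
exists m; split; [apply INR_lt; simpl; lra|]; rewrite <- Hm; split; [|exact Hsol].
rewrite Hw2; field; lra.
Qed.

Lemma periodic_oscillator_classification : (exists u0, p u0 <> 0) ->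
  exists (m : nat) (A B : R),
    c = 1 - INR m ^ 2 / k ^ 2 /\ (m = 0%nat -> B = 0) /\ (A <> 0 \/ B <> 0) /\
    forall u, p u = A * cos (INR m * u) + B * sin (INR m * u) /\
              r u = INR m / k * (- A * sin (INR m * u) + B * cos (INR m * u)).
Proof.
intros [u0 Hu0]; destruct (Rtotal_order c 1) as [Hc | [Hc | Hc]].
- destruct (oscillator_contracting Hc (ex_intro _ u0 Hu0)) as [m [Hm [Hcm Hsol]]].
  assert (HmR : 0 < INR m) by (apply lt_0_INR, Hm).
  exists m, (p 0), (k * r 0 / INR m); split; [exact Hcm | split; [lia | split]].
  + apply (trig_coeffs_nonzero _ _ (INR m * u0)); rewrite <- (proj1 (Hsol u0)); exact Hu0.
  + intro u; destruct (Hsol u) as [Hp Hr]; split; [exact Hp | rewrite Hr; field; lra].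
- destruct (oscillator_critical Hc u0) as [Hpu0 _].
  exists 0%nat, (p 0), 0; split; [rewrite Hc; simpl; field; lra | split; [reflexivity | split]].
  + left; rewrite <- Hpu0; exact Hu0.
  + intro u; destruct (oscillator_critical Hc u) as [Hp Hr]; simpl.
    rewrite Hp, Hr, Rmult_0_l, cos_0, sin_0; split; field; lra.
- exfalso; exact (Hu0 (oscillator_expanding_zero Hc u0)).
Qed.

End PeriodicOscillator.

Lemma sq_INR_sub_neq0 n m : (0 < n)%nat -> m <> n -> INR n ^ 2 - INR m ^ 2 <> 0.
Proof.
intros Hn Hmn E.
assert (INR n <> INR m) by (apply not_INR; auto).
pose proof (lt_0_INR _ Hn); pose proof (pos_INR m).
replace (INR n ^ 2 - INR m ^ 2) with ((INR n - INR m) * (INR n + INR m)) in E by ring.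
destruct (Rmult_integral _ _ E); lra.
Qed.

Lemma admissible_neq n m C1 C2 : (0 < n)%nat -> admissible n m C1 C2 -> m <> n.
Proof. intros Hn [[_ [Hmn _]] | [-> _]]; [exact Hmn | lia]. Qed.

Lemma X_star_formula_in_frame n m C1 C2 u :
  let d := INR n ^ 2 - INR m ^ 2 in
  X_star_formula n m C1 C2 u =
  in_frame (nu_star n u) (INR n / d * (C1 * cos (INR m * u) + C2 * sin (INR m * u)))
                         (INR m / d * (C2 * cos (INR m * u) - C1 * sin (INR m * u))).
Proof. unfold X_star_formula, in_frame, nu_star; simpl; f_equal; ring. Qed.

Lemma dcurve_X_star_formula n m C1 C2 u : INR n ^ 2 - INR m ^ 2 <> 0 ->
  dcurve (X_star_formula n m C1 C2) u =
  in_frame (nu_star n u) 0 (C1 * cos (INR m * u) + C2 * sin (INR m * u)).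
Proof.
intro Hd; unfold dcurve, X_star_formula, in_frame, nu_star; simpl.
f_equal; apply is_derive_unique; auto_derive; auto; field;
  contradict Hd; rewrite <- Hd; ring.
Qed.

Lemma dcurve_ext (X Y : R -> R * R) u : (forall v, X v = Y v) -> dcurve X u = dcurve Y u.
Proof.
intro HXY; unfold dcurve; f_equal; apply Derive_ext; intro v; rewrite HXY; reflexivity.
Qed.

Lemma leg_beta_X_star_formula n m C1 C2 X u : INR n ^ 2 - INR m ^ 2 <> 0 ->
  (forall v, X v = X_star_formula n m C1 C2 v) ->
  leg_beta X (nu_star n) u = C1 * cos (INR m * u) + C2 * sin (INR m * u).
Proof.
intros Hd HX; unfold leg_beta.
rewrite (dcurve_ext _ _ u HX), dcurve_X_star_formula by exact Hd.
apply dot_in_frame_J, nu_star_unit.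
Qed.

Definition scaled_flow (lam : R -> R) (X : R -> R * R) : R -> R -> R * R :=
  fun u t => (lam t * fst (X u), lam t * snd (X u)).

Lemma normal_velocity_scaled_flow lam X (nu : R -> R * R) u t :
  normal_velocity (scaled_flow lam X) (fun u _ => nu u) u t = Derive lam t * dot (X u) (nu u).
Proof. unfold normal_velocity, scaled_flow, dot; simpl; rewrite !Derive_scal_l; ring. Qed.

Lemma scale_factor_regular (lam g : R -> R) u0 : g u0 <> 0 ->
  smooth_pos (fun u t => lam t * g u) -> cont_time_C1 (fun u t => lam t * g u) ->
  (forall t, 0 < t -> ex_derive lam t) /\ filterlim lam (at_right 0) (locally (lam 0)).
Proof.
intros Hg Hsmooth [_ Hcont]; assert (Hgpos : 0 < Rabs (g u0)) by (apply Rabs_pos_lt, Hg).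
split.
- intros t Ht; destruct (Hsmooth nil u0 t Ht) as [_ [Hd _]]; simpl in Hd.
  apply (ex_derive_ext (fun s => / g u0 * (lam s * g u0))).
  { intro s; change (/ g u0 * (lam s * g u0) = lam s); field; exact Hg. }
  apply ex_derive_scal, Hd.
- apply filterlim_locally; intro eps.
  destruct (Hcont 0 (Rle_refl 0) (eps * Rabs (g u0) / 2)) as [d [Hd Hclose]].
  { apply Rdiv_lt_0_compat; [apply Rmult_lt_0_compat; [apply cond_pos | exact Hgpos] | lra]. }
  exists (mkposreal d Hd); intros s Hs Hspos; change (Rabs (s - 0) < d) in Hs.
  destruct (Hclose s (Rlt_le _ _ Hspos) Hs u0) as [Hclose_s _].
  change (Rabs (lam s - lam 0) < eps).
  replace (lam s * g u0 - lam 0 * g u0) with ((lam s - lam 0) * g u0) in Hclose_s by ring.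
  rewrite Rabs_mult in Hclose_s; pose proof (cond_pos eps).
  apply Rmult_lt_reg_r with (Rabs (g u0)); [exact Hgpos | nra].
Qed.

Section ForwardDirection.
Variables (n : nat) (X : R -> R * R) (lam : R -> R).
Hypothesis n_pos : (0 < n)%nat.
Hypothesis X_legendre : legendre X (nu_star n).
Hypothesis X_nonconstant : exists u v, X u <> X v.
Hypothesis lam_0 : lam 0 = 1.
Hypothesis flow : inverse_curvature_flow (scaled_flow lam X) (fun u _ => nu_star n u).

Lemma flow_velocity_identity u t : 0 < t ->
  Derive lam t * support n X u = lam t * leg_beta X (nu_star n) u / INR n.
Proof.
intro Ht; destruct flow as [_ [_ [_ [_ [_ [_ Hvel]]]]]].
rewrite <- leg_ell_nu_star with (u := u), <- leg_beta_scale.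
unfold support; rewrite <- (normal_velocity_scaled_flow lam X (nu_star n)); apply Hvel, Ht.
Qed.

Lemma support_nonzero : exists u0, support n X u0 <> 0.
Proof.
destruct X_nonconstant as [u [v Huv]]; apply NNPP; intro Hzero.
assert (Hp : forall w, support n X w = 0) by (intro w; apply NNPP; intro Hw; apply Hzero; exists w; exact Hw).
assert (Hr : forall w, tangential n X w = 0).
{ intro w; apply Rmult_eq_reg_l with (INR n); [|apply not_0_INR; lia].
  rewrite Rmult_0_r, <- (is_derive_unique _ _ _ (support_is_derive n X X_legendre w)).
  rewrite (Derive_ext _ (fun _ => 0) _ Hp); apply Derive_const. }
apply Huv; rewrite (curve_in_frame n X u), (curve_in_frame n X v), !Hp, !Hr.
unfold in_frame; f_equal; ring.
Qed.

Lemma scale_factor_exponential :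
  exists c, (forall t, 0 <= t -> lam t = exp (c * t)) /\
            (forall u, leg_beta X (nu_star n) u = INR n * c * support n X u).
Proof.
destruct support_nonzero as [u0 Hu0].
assert (HnR : 0 < INR n) by (apply lt_0_INR, n_pos).
assert (Hlam : (forall t, 0 < t -> ex_derive lam t) /\ filterlim lam (at_right 0) (locally (lam 0))).
{ destruct flow as [_ [[Hcont1 Hcont2] [_ [[Hsmooth1 Hsmooth2] _]]]].
  destruct (Req_dec (fst (X u0)) 0) as [Hfst | Hfst].
  - apply (scale_factor_regular lam (fun u => snd (X u)) u0); auto.
    contradict Hu0; unfold support, dot, nu_star; simpl; rewrite Hfst, Hu0; ring.
  - apply (scale_factor_regular lam (fun u => fst (X u)) u0); auto. }
destruct Hlam as [Hlam_deriv Hlam_lim].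
set (c := leg_beta X (nu_star n) u0 / (INR n * support n X u0)).
assert (Hode : forall t, 0 < t -> is_derive lam t (c * lam t)).
{ intros t Ht; replace (c * lam t) with (Derive lam t); [apply Derive_correct, Hlam_deriv, Ht|].
  apply Rmult_eq_reg_r with (support n X u0); [|exact Hu0].
  rewrite flow_velocity_identity by exact Ht; unfold c; field; lra. }
assert (Hexp : forall t, 0 <= t -> lam t = exp (c * t)).
{ intros t Ht; rewrite (exp_growth_unique lam c Hode Hlam_lim t Ht), lam_0; ring. }
exists c; split; [exact Hexp|]; intro u.
assert (E := flow_velocity_identity u 1 Rlt_0_1).
rewrite (is_derive_unique _ _ _ (Hode 1 Rlt_0_1)), Hexp in E by lra.
pose proof (exp_pos (c * 1)).
apply Rmult_eq_reg_l with (exp (c * 1) / INR n); [|apply Rgt_not_eq, Rdiv_lt_0_compat; lra].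
transitivity (c * exp (c * 1) * support n X u); [|field; lra].
rewrite E; field; lra.
Qed.

Lemma forward_classification :
  exists (m : nat) (C1 C2 : R),
    admissible n m C1 C2 /\
    (forall t, 0 <= t -> lam t = exp ((1 - INR m ^ 2 / INR n ^ 2) * t)) /\
    (forall u, X u = X_star_formula n m C1 C2 u).
Proof.
destruct scale_factor_exponential as [c [Hlam Hbeta]].
assert (HnR : 0 < INR n) by (apply lt_0_INR, n_pos).
destruct (periodic_oscillator_classification (support n X) (tangential n X) (INR n) c HnR
  (support_is_derive n X X_legendre)
  ltac:(intro u; replace (INR n * (c - 1) * support n X u)
          with (leg_beta X (nu_star n) u - INR n * support n X u) by (rewrite Hbeta; ring);
        apply tangential_is_derive, X_legendre)
  (support_periodic n X X_legendre) (tangential_periodic n X X_legendre) support_nonzero)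
  as [m [A [B [Hc [HB0 [HAB Hsol]]]]]].
assert (Hmn : m <> n).
{ intros ->; destruct X_nonconstant as [u [v Huv]]; apply Huv.
  apply (leg_beta_zero_const X (nu_star n) X_legendre); intro w.
  rewrite Hbeta, Hc; field_simplify; [ring | lra]. }
pose proof (sq_INR_sub_neq0 n m n_pos Hmn) as Hd.
exists m, (A * (INR n ^ 2 - INR m ^ 2) / INR n), (B * (INR n ^ 2 - INR m ^ 2) / INR n).
split; [|split].
- assert (Hscale : forall a, a <> 0 -> a * (INR n ^ 2 - INR m ^ 2) / INR n <> 0).
  { intros a Ha; unfold Rdiv; repeat apply Rmult_integral_contrapositive_currified; auto.
    apply Rinv_neq_0_compat; lra. }
  destruct m as [|m'].
  + right; rewrite (HB0 eq_refl) in HAB |- *; split; [reflexivity | split].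
    * apply Hscale; destruct HAB as [HA | []]; [exact HA | reflexivity].
    * unfold Rdiv; ring.
  + left; split; [lia | split; [exact Hmn|]].
    destruct HAB; [left | right]; apply Hscale; assumption.
- intros t Ht; rewrite Hlam, Hc by exact Ht; reflexivity.
- intro u; rewrite (curve_in_frame n X u), X_star_formula_in_frame, (proj1 (Hsol u)), (proj2 (Hsol u)).
  f_equal; field; lra.
Qed.

End ForwardDirection.

Lemma X_star_formula_trig_poly n m C1 C2 : exists L1 L2, forall u,
  fst (X_star_formula n m C1 C2 u) = trig_poly L1 u /\
  snd (X_star_formula n m C1 C2 u) = trig_poly L2 u.
Proof.
unfold X_star_formula; cbv zeta; cbn [fst snd].
set (a := INR n / (INR n ^ 2 - INR m ^ 2)); set (b := INR m / (INR n ^ 2 - INR m ^ 2)).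
exists (product_to_sum (C1 * a) (C2 * a) (C2 * b) (- (C1 * b)) (INR n) (INR m)),
       (product_to_sum (C2 * b) (- (C1 * b)) (- (C1 * a)) (- (C2 * a)) (INR n) (INR m)).
intro u; rewrite <- !trig_poly_product_to_sum; split; ring.
Qed.

Lemma backward_flow n X lam m C1 C2 : (0 < n)%nat -> legendre X (nu_star n) ->
  admissible n m C1 C2 ->
  (forall t, 0 <= t -> lam t = exp ((1 - INR m ^ 2 / INR n ^ 2) * t)) ->
  (forall u, X u = X_star_formula n m C1 C2 u) ->
  inverse_curvature_flow (scaled_flow lam X) (fun u _ => nu_star n u).
Proof.
intros Hn HL Hadm Hlam HX.
set (c := 1 - INR m ^ 2 / INR n ^ 2) in Hlam.
assert (HnR : 0 < INR n) by (apply lt_0_INR, Hn).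
assert (Hd := sq_INR_sub_neq0 n m Hn (admissible_neq n m C1 C2 Hn Hadm)).
destruct (X_star_formula_trig_poly n m C1 C2) as [L1 [L2 HL12]].
assert (HX1 : forall u t, 0 <= t -> fst (scaled_flow lam X u t) = exp (c * t) * trig_poly L1 u).
{ intros u t Ht; unfold scaled_flow; simpl; rewrite Hlam, HX, (proj1 (HL12 u)) by exact Ht; reflexivity. }
assert (HX2 : forall u t, 0 <= t -> snd (scaled_flow lam X u t) = exp (c * t) * trig_poly L2 u).
{ intros u t Ht; unfold scaled_flow; simpl; rewrite Hlam, HX, (proj2 (HL12 u)) by exact Ht; reflexivity. }
assert (Hnu1 : forall u t : R, 0 <= t -> fst (nu_star n u) = exp (0 * t) * trig_poly ((0, 1, INR n) :: nil) u).
{ intros u t _; simpl; rewrite Rmult_0_l, exp_0; ring. }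
assert (Hnu2 : forall u t : R, 0 <= t -> snd (nu_star n u) = exp (0 * t) * trig_poly ((-1, 0, INR n) :: nil) u).
{ intros u t _; simpl; rewrite Rmult_0_l, exp_0; ring. }
split; [|split; [|split; [|split; [|split; [|split]]]]].
- intros t _; exact (legendre_scale X (nu_star n) (lam t) HL).
- split; [exact (separable_cont_time_C1 _ _ _ HX1) | exact (separable_cont_time_C1 _ _ _ HX2)].
- split; [exact (separable_cont_time_C1 _ _ _ Hnu1) | exact (separable_cont_time_C1 _ _ _ Hnu2)].
- split; [exact (separable_smooth_pos _ _ _ HX1) | exact (separable_smooth_pos _ _ _ HX2)].
- split; [exact (separable_smooth_pos _ _ _ Hnu1) | exact (separable_smooth_pos _ _ _ Hnu2)].
- intros t u _; unfold slice; rewrite leg_ell_nu_star; exact HnR.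
- intros t u Ht; unfold slice; rewrite normal_velocity_scaled_flow.
  change (Derive lam t * dot (X u) (nu_star n u) =
          leg_beta (fun v => (lam t * fst (X v), lam t * snd (X v))) (nu_star n) u / leg_ell (nu_star n) u).
  rewrite leg_beta_scale, leg_ell_nu_star, (leg_beta_X_star_formula n m C1 C2 X u Hd HX).
  rewrite HX, X_star_formula_in_frame, dot_in_frame_nu by apply nu_star_unit.
  assert (Hdlam : Derive lam t = c * exp (c * t)).
  { rewrite (Derive_ext_loc lam (fun s => exp (c * s))).
    - apply is_derive_unique; auto_derive; [exact I | ring].
    - eapply filter_imp; [|apply (locally_pos t Ht)]; intros s Hs; apply Hlam; lra. }
  rewrite Hdlam, Hlam by lra.
  unfold c; field; split; [lra | exact Hd].
Qed.

Theorem theorem1p2 (n : nat) (Xs : R -> R * R) (lam : R -> R) :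
  (0 < n)%nat ->
  legendre Xs (nu_star n) ->
  (exists u v, Xs u <> Xs v) ->
  lam 0 = 1 ->
  (inverse_curvature_flow
     (fun u t => (lam t * fst (Xs u), lam t * snd (Xs u)))
     (fun u t => nu_star n u)
   <->
   exists (m : nat) (C1 C2 : R),
     admissible n m C1 C2 /\
     (forall t, 0 <= t -> lam t = exp ((1 - INR m ^ 2 / INR n ^ 2) * t)) /\
     (forall u, Xs u = X_star_formula n m C1 C2 u))
  /\
  (forall (m : nat) (C1 C2 : R),
     admissible n m C1 C2 ->
     (forall t, 0 <= t -> lam t = exp ((1 - INR m ^ 2 / INR n ^ 2) * t)) ->
     (forall u, Xs u = X_star_formula n m C1 C2 u) ->
     forall u, leg_ell (nu_star n) u = INR n /\
               leg_beta Xs (nu_star n) u = C1 * cos (INR m * u) + C2 * sin (INR m * u)).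
Proof.
intros Hn HL Hnonconst H0; split; [split|].
- exact (forward_classification n Xs lam Hn HL Hnonconst H0).
- intros [m [C1 [C2 [Hadm [Hlam HX]]]]].
  exact (backward_flow n Xs lam m C1 C2 Hn HL Hadm Hlam HX).
- intros m C1 C2 Hadm _ HX u; split; [apply leg_ell_nu_star|].
  apply leg_beta_X_star_formula; [|exact HX].
  exact (sq_INR_sub_neq0 n m Hn (admissible_neq n m C1 C2 Hn Hadm)).
Qed.
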